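(* Let $p\ge 3$ be odd and let $\pi=\langle u,v\mid u^p=v^{2p+1}\rangle$ be the group of the $(p,2p+1)$ torus knot, with meridian $m=u^nv^{-k}$ and longitude $l=v^{2p+1}m^{-p(2p+1)}$, where $k,n\in\mathbb{Z}$ satisfy $-pk+(2p+1)n=1$. If $X,Y\in H[\pi]$ are the images of $m,l$, then $Y\in H^+[\pi][X^{\pm1}]$.
   Context: For a group $\pi$, the Brumfiel–Hilden algebra is $H[\pi]:=\mathbb{C}[\pi]/I$, where $I$ is the two-sided ideal of the group algebra generated by all elements $g(h+h^{-1})-(h+h^{-1})g$ with $g,h\in\pi$. $H^+[\pi]\subset H[\pi]$ is the subalgebra generated by the images of all $g+g^{-1}$, $g\in\pi$. For an element $X\in H[\pi]$ which is the image of a group element, $H^+[\pi][X^{\pm1}]$ denotes the subalgebra of $H[\pi]$ generated by $H^+[\pi]$, $X$ and $X^{-1}$. *)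

From HB Require Import structures.
From mathcomp Require Import all_boot all_order all_algebra all_field.
Set Implicit Arguments. Unset Strict Implicit. Unset Printing Implicit Defensive.
Import Order.TTheory GRing.Theory Num.Theory.
Local Open Scope ring_scope.

(* Words in the generators u, v of pi = < u, v | u^p = v^(2p+1) >.
   A word denotes an element of pi. *)
Inductive gword : Type :=
  | gone : gword
  | gu : gword
  | gv : gword
  | gmul : gword -> gword -> gword
  | ginv : gword -> gword.

Fixpoint gpown (w : gword) (n : nat) : gword :=
  match n with O => gone | S n' => gmul w (gpown w n') end.

Definition gpowz (w : gword) (z : int) : gword :=
  match z with Posz n => gpown w n | Negz n => ginv (gpown w n.+1) end.

Definition meridian (k n : int) : gword := gmul (gpowz gu n) (gpowz gv (- k)).
Definition longitude (p : nat) (k n : int) : gword :=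
  gmul (gpown gv (2 * p + 1)%N) (gpowz (meridian k n) (- ((p * (2 * p + 1))%N : int))).

(* Evaluation of a word under the representation u |-> U, v |-> V of pi into
   the units of an algebra A (Ui, Vi the inverses): returns (image, inverse of image). *)
Fixpoint geval (A : algType algC) (U Ui V Vi : A) (w : gword) : A * A :=
  match w with
  | gone => (1, 1)
  | gu => (U, Ui)
  | gv => (V, Vi)
  | gmul a b => let: (x, xi) := geval U Ui V Vi a in
                let: (y, yi) := geval U Ui V Vi b in (x * y, yi * xi)
  | ginv a => let: (x, xi) := geval U Ui V Vi a in (xi, x)
  end.

(* An algebra homomorphism from H[pi] to A is the same as a representation
   of pi into units of A satisfying the defining relations of H[pi]. *)
Definition BH_rep (p : nat) (A : algType algC) (U Ui V Vi : A) : Prop :=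
  [/\ U * Ui = 1 /\ Ui * U = 1, V * Vi = 1 /\ Vi * V = 1,
      U ^+ p = V ^+ (2 * p + 1)%N &
      (forall g h : gword,
        let gg := (geval U Ui V Vi g).1 in
        let s := (geval U Ui V Vi h).1 + (geval U Ui V Vi h).2 in
        gg * s = s * gg) ].

(* Formal expressions in the generators of the subalgebra H^+[pi][X^{+-1}]:
   the elements g + g^{-1} (g in pi), X, X^{-1}, closed under algebra operations. *)
Inductive hterm : Type :=
  | hX : hterm
  | hXinv : hterm
  | hplus : gword -> hterm
  | hscal : algC -> hterm
  | hadd : hterm -> hterm -> hterm
  | hmul : hterm -> hterm -> hterm.

Fixpoint heval (A : algType algC) (U Ui V Vi : A) (X Xi : A) (t : hterm) : A :=
  match t with
  | hX => X
  | hXinv => Xi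
  | hplus g => (geval U Ui V Vi g).1 + (geval U Ui V Vi g).2
  | hscal c => c%:A
  | hadd a b => heval U Ui V Vi X Xi a + heval U Ui V Vi X Xi b
  | hmul a b => heval U Ui V Vi X Xi a * heval U Ui V Vi X Xi b
  end.

(* In H[pi] the element c = u + u^-1 is central, and u^j = e_j u - b_j with
   e_j, b_j Chebyshev polynomials in c. Put e = e_p, b = b_p.  Since
   u^p = v^(2p+1) is central, (e u - b) v = v (e u - b), i.e. e u v = e v u:
   after multiplication by e the generators commute.  Hence
   e m^(2p+1) = e u^(n(2p+1)) v^(-k(2p+1)) = e u^(n(2p+1) - kp) = e u, so
   l = u^p m^(-p(2p+1)) = (e X^(2p+1) - b) X^(-p(2p+1)). *)

From HB Require Import structures.
From mathcomp Require Import all_boot all_order all_algebra all_field.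
From mathcomp Require Import zify.
Import GRing.Theory.
Local Open Scope ring_scope.
Set Implicit Arguments.
Unset Strict Implicit.

Section IntegerPowers.
Variable R : pzRingType.

(* The target algebras are not unit rings, so integer powers are taken with
   respect to an explicitly supplied inverse [xi] of [x]. *)
Definition expz (x xi : R) (z : int) : R :=
  match z with Posz m => x ^+ m | Negz m => xi ^+ m.+1 end.

Lemma expzN (x xi : R) z : expz x xi (- z) = expz xi x z.
Proof. by case: z => [[|m]|m]; rewrite /= ?expr0. Qed.

Lemma commr_expz (y x xi : R) z :
  GRing.comm y x -> GRing.comm y xi -> GRing.comm y (expz x xi z).
Proof. by case: z => m cx cxi; apply: commrX. Qed.

Lemma commr_inverse (x xi y : R) : x * xi = 1 -> xi * x = 1 ->
  GRing.comm x y -> GRing.comm xi y.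
Proof.
move=> x_xi xi_x cxy; rewrite /GRing.comm -[xi * y]mulr1 -x_xi mulrA.
by rewrite -[xi * y * x]mulrA -cxy mulrA xi_x mul1r.
Qed.

Lemma mulr_exprV (x xi : R) m : x * xi = 1 -> x ^+ m * xi ^+ m = 1.
Proof.
move=> x_xi; elim: m => [|m IH]; first by rewrite mulr1.
by rewrite exprSr exprS mulrA -(mulrA _ x) x_xi mulr1.
Qed.

Variables x xi : R.
Hypotheses (x_xi : x * xi = 1) (xi_x : xi * x = 1).

Lemma expzD1 z : expz x xi (z + 1) = expz x xi z * x.
Proof.
case: z => [m|[|m]].
- by rewrite -PoszD addn1 /= exprSr.
- by rewrite /= expr1 xi_x.
- have -> : Negz m.+1 + 1 = Negz m by rewrite !NegzE; lia.
  by rewrite /= [in RHS]exprSr -mulrA xi_x mulr1.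
Qed.

Lemma expzB1 z : expz x xi (z - 1) = expz x xi z * xi.
Proof.
case: z => [[|m]|m].
- by rewrite /= expr1 mul1r.
- have -> : Posz m.+1 - 1 = Posz m by lia.
  by rewrite /= [in RHS]exprSr -mulrA x_xi mulr1.
- have -> : Negz m - 1 = Negz m.+1 by rewrite !NegzE; lia.
  by rewrite /= [in LHS]exprSr.
Qed.

Lemma expzD a b : expz x xi (a + b) = expz x xi a * expz x xi b.
Proof.
elim/int_rect: b a => [|m IH|m IH] a.
- by rewrite addr0 mulr1.
- by rewrite -[m.+1]addn1 PoszD addrA !expzD1 IH mulrA.
- have -> : - Posz m.+1 = - m%:Z - 1 by lia.
  by rewrite addrA !expzB1 IH mulrA.
Qed.

Lemma expzX z m : expz x xi z ^+ m = expz x xi (z * m%:Z).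
Proof.
elim: m => [|m IH]; first by rewrite mulr0 expr0.
by rewrite exprSr IH -expzD -[m.+1]addn1 PoszD mulrDr mulr1.
Qed.

Lemma expzM z m : expz x xi (z * m%:Z) = expz (x ^+ m) (xi ^+ m) z.
Proof.
case: z => j; first by rewrite -PoszM /= mulnC exprM.
by rewrite NegzE mulNr !expzN -PoszM /= mulnC exprM.
Qed.

End IntegerPowers.

Section CommutingUnderLeftFactor.
Variables (R : pzRingType) (e : R).

Definition ecomm (a b : R) := e * (a * b) = e * (b * a).

Lemma ecommXr a b j : GRing.comm e a -> GRing.comm e b ->
  ecomm a b -> ecomm a (b ^+ j).
Proof.
move=> ea eb eab; elim: j => [|j IH]; first by rewrite /ecomm expr0 mulr1 mul1r.
rewrite /ecomm exprS !mulrA -(mulrA e a b) eab mulrA eb -!mulrA IH.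
by rewrite !mulrA -eb.
Qed.

Lemma ecommX a b i j : GRing.comm e a -> GRing.comm e b ->
  ecomm a b -> ecomm (a ^+ i) (b ^+ j).
Proof.
move=> ea eb eab; have ebj : GRing.comm e (b ^+ j) by apply: commrX.
exact/esym/ecommXr/esym/ecommXr.
Qed.

Lemma ecommVl a ai b : a * ai = 1 -> ai * a = 1 ->
  GRing.comm e a -> GRing.comm e ai -> ecomm a b -> ecomm ai b.
Proof.
move=> a_ai ai_a ea eai eab; rewrite /ecomm.
rewrite -[e * (b * ai)]mul1r -ai_a -mulrA (mulrA a e) -ea -(mulrA e a).
rewrite (mulrA a b ai) (mulrA e (a * b) ai) eab -(mulrA e (b * a) ai).
by rewrite -(mulrA b a ai) a_ai mulr1 !mulrA eai.
Qed.

Lemma ecomm_exprMn a b m : GRing.comm e a -> GRing.comm e b ->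
  ecomm a b -> e * (a * b) ^+ m = e * (a ^+ m * b ^+ m).
Proof.
move=> ea eb eab; elim: m => [|m IH]; first by rewrite !expr0 !mulr1.
have eam : GRing.comm e (a ^+ m) by apply: commrX.
rewrite exprSr mulrA IH.
transitivity (a ^+ m * (e * (b ^+ m * a)) * b); first by rewrite !mulrA eam.
by rewrite -(ecommXr m ea eb eab) !exprSr !mulrA eam.
Qed.

Lemma ecomm_expz (x xi y yi : R) :
  x * xi = 1 -> xi * x = 1 -> y * yi = 1 -> yi * y = 1 ->
  GRing.comm e x -> GRing.comm e xi -> GRing.comm e y -> GRing.comm e yi ->
  ecomm x y -> forall i j, ecomm (expz x xi i) (expz y yi j).
Proof.
move=> x_xi xi_x y_yi yi_y ex exi ey eyi exy.
have exiy : ecomm xi y := ecommVl x_xi xi_x ex exi exy.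
have eyxi : ecomm yi xi := ecommVl y_yi yi_y ey eyi (esym exiy).
have eyix : ecomm yi x := ecommVl y_yi yi_y ey eyi (esym exy).
move=> [i|i] [j|j] /=.
- exact: ecommX.
- exact/esym/ecommX.
- exact: ecommX.
- exact/esym/ecommX.
Qed.

End CommutingUnderLeftFactor.

Section Chebyshev.
Variable R : pzRingType.

(* [(cheb_pair c j).1] is the Chebyshev polynomial of the second kind
   [U_(j-1)(c/2)], and [(cheb_pair c j).2] is the previous one. *)
Fixpoint cheb_pair (c : R) (j : nat) : R * R :=
  match j with
  | 0 => (0, -1)
  | j.+1 => ((cheb_pair c j).1 * c - (cheb_pair c j).2, (cheb_pair c j).1)
  end.

Lemma commr_cheb_pair y c j : GRing.comm y c ->
  GRing.comm y (cheb_pair c j).1 /\ GRing.comm y (cheb_pair c j).2.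
Proof.
move=> yc; elim: j => [|j [IH1 IH2]]; first by split; [apply: commr0 | apply: commrN1].
by split => //=; apply: commrB => //; apply: commrM.
Qed.

Lemma expr_cheb_pair (U Ui : R) j : Ui * U = 1 ->
  U ^+ j = (cheb_pair (U + Ui) j).1 * U - (cheb_pair (U + Ui) j).2.
Proof.
move=> Ui_U; elim: j => [|j IH]; first by rewrite expr0 /= mul0r sub0r opprK.
have U2 : U * U = (U + Ui) * U - 1 by rewrite mulrDl Ui_U addrK.
rewrite exprSr IH /= mulrBl -mulrA U2 mulrBr mulr1 mulrA.
by rewrite [in RHS]mulrBl addrAC.
Qed.

End Chebyshev.

Section WordEvaluation.
Variables (A : algType algC) (U Ui V Vi : A).

Lemma geval_mul a b : geval U Ui V Vi (gmul a b) =
  ((geval U Ui V Vi a).1 * (geval U Ui V Vi b).1,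
   (geval U Ui V Vi b).2 * (geval U Ui V Vi a).2).
Proof. by rewrite /=; case: (geval U Ui V Vi a); case: (geval U Ui V Vi b). Qed.

Lemma geval_ginv a : geval U Ui V Vi (ginv a) =
  ((geval U Ui V Vi a).2, (geval U Ui V Vi a).1).
Proof. by rewrite /=; case: (geval U Ui V Vi a). Qed.

Lemma geval_pown w m : geval U Ui V Vi (gpown w m) =
  ((geval U Ui V Vi w).1 ^+ m, (geval U Ui V Vi w).2 ^+ m).
Proof.
elim: m => [|m IH] /=; first by rewrite !expr0.
by rewrite IH; case: (geval U Ui V Vi w) => x xi; rewrite exprS exprSr.
Qed.

Lemma geval_powz w z : geval U Ui V Vi (gpowz w z) =
  (expz (geval U Ui V Vi w).1 (geval U Ui V Vi w).2 z,
   expz (geval U Ui V Vi w).2 (geval U Ui V Vi w).1 z).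
Proof. by case: z => m; rewrite /gpowz ?geval_ginv geval_pown. Qed.

End WordEvaluation.

Definition hsub (a b : hterm) : hterm := hadd a (hmul (hscal (-1)) b).

Fixpoint hpow (t : hterm) (m : nat) : hterm :=
  match m with 0 => hscal 1 | m.+1 => hmul t (hpow t m) end.

Fixpoint hcheb_pair (j : nat) : hterm * hterm :=
  match j with
  | 0 => (hscal 0, hscal (-1))
  | j.+1 => (hsub (hmul (hcheb_pair j).1 (hplus gu)) (hcheb_pair j).2, (hcheb_pair j).1)
  end.

Definition longitude_term (p : nat) : hterm :=
  hmul (hsub (hmul (hcheb_pair p).1 (hpow hX (2 * p + 1))) (hcheb_pair p).2)
       (hpow hXinv (p * (2 * p + 1))).

Section TermEvaluation.
Variables (A : algType algC) (U Ui V Vi X Xi : A).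
Local Notation ev := (heval U Ui V Vi X Xi).

Lemma heval_hpow t m : ev (hpow t m) = ev t ^+ m.
Proof. by elim: m => [|m IH] /=; rewrite ?scale1r // IH exprS. Qed.

Lemma heval_hcheb_pair j :
  ev (hcheb_pair j).1 = (cheb_pair (U + Ui) j).1 /\
  ev (hcheb_pair j).2 = (cheb_pair (U + Ui) j).2.
Proof.
elim: j => [|j [IH1 IH2]] /=; first by rewrite scale0r scaleN1r.
by rewrite scaleN1r mulN1r IH1 IH2.
Qed.

Lemma heval_longitude_term p :
  ev (longitude_term p) =
  ((cheb_pair (U + Ui) p).1 * X ^+ (2 * p + 1) - (cheb_pair (U + Ui) p).2)
  * Xi ^+ (p * (2 * p + 1)).
Proof.
have [e_ev b_ev] := heval_hcheb_pair p.
by rewrite /= scaleN1r mulN1r !heval_hpow e_ev b_ev.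
Qed.

End TermEvaluation.

Section TorusKnot.
Variables (A : algType algC) (p : nat) (U Ui V Vi : A).
Hypotheses (U_Ui : U * Ui = 1) (Ui_U : Ui * U = 1).
Hypotheses (V_Vi : V * Vi = 1) (Vi_V : Vi * V = 1).
Hypothesis Up_Vq : U ^+ p = V ^+ (2 * p + 1).
Hypothesis V_comm_trace : GRing.comm V (U + Ui).

Let e := (cheb_pair (U + Ui) p).1.
Let b := (cheb_pair (U + Ui) p).2.

Lemma comm_cheb_generators :
  [/\ GRing.comm e U, GRing.comm e Ui, GRing.comm e V & GRing.comm e Vi].
Proof.
have comm_trace y : GRing.comm y (U + Ui) -> GRing.comm e y.
  by move=> /(commr_cheb_pair p) [/commr_sym].
have cU : GRing.comm U (U + Ui) by rewrite /GRing.comm mulrDr mulrDl U_Ui Ui_U.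
split; apply: comm_trace => //.
- exact: commr_inverse U_Ui Ui_U cU.
- exact: commr_inverse V_Vi Vi_V V_comm_trace.
Qed.

Lemma ecomm_UV : ecomm e U V.
Proof.
have [eU _ eV _] := comm_cheb_generators.
have [_ bV] := commr_cheb_pair p V_comm_trace.
have UpV : (e * U - b) * V = V * (e * U - b).
  by rewrite -expr_cheb_pair // Up_Vq -exprSr -exprS.
move: UpV; rewrite mulrBl mulrBr bV => /addIr.
by rewrite /ecomm mulrA -eV -!mulrA => ->.
Qed.

Lemma expz_relation j : expz V Vi (j * (2 * p + 1)%N%:Z) = expz U Ui (j * p%:Z).
Proof.
have Uip_Viq : Ui ^+ p = Vi ^+ (2 * p + 1).
  rewrite -[Ui ^+ p]mulr1 -(mulr_exprV (2 * p + 1) V_Vi) mulrA -Up_Vq.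
  by rewrite mulr_exprV ?mul1r.
by rewrite !expzM // Up_Vq Uip_Viq.
Qed.

Lemma ecomm_meridian_power (k n : int) : n * (2 * p + 1)%N%:Z + - k * p%:Z = 1 ->
  e * (expz U Ui n * expz V Vi (- k)) ^+ (2 * p + 1) = e * U.
Proof.
move=> hkn; have [eU eUi eV eVi] := comm_cheb_generators.
have eUV := ecomm_expz U_Ui Ui_U V_Vi Vi_V eU eUi eV eVi ecomm_UV n (- k).
rewrite (ecomm_exprMn _ (commr_expz _ eU eUi) (commr_expz _ eV eVi) eUV).
by rewrite !expzX // expz_relation -expzD // hkn /= expr1.
Qed.

Lemma longitude_cheb_pair (k n : int) : n * (2 * p + 1)%N%:Z + - k * p%:Z = 1 ->
  e * (expz U Ui n * expz V Vi (- k)) ^+ (2 * p + 1) - b = V ^+ (2 * p + 1).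
Proof.
by move=> hkn; rewrite ecomm_meridian_power // -Up_Vq (expr_cheb_pair p Ui_U).
Qed.

End TorusKnot.

Unset Implicit Arguments.
Theorem mainTheorem3 (p : nat) (k n : int) :
  (3 <= p)%N -> odd p ->
  - (p%:Z * k) + (2 * p + 1)%N%:Z * n = 1 ->
  exists t : hterm,
    forall (A : algType algC) (U Ui V Vi : A),
      BH_rep p U Ui V Vi ->
      let mX := geval U Ui V Vi (meridian k n) in
      heval U Ui V Vi mX.1 mX.2 t = (geval U Ui V Vi (longitude p k n)).1.
Proof.
move=> _ _ hkn; exists (longitude_term p).
move=> A U Ui V Vi [[U_Ui Ui_U] [V_Vi Vi_V] Up_Vq central] mX.
rewrite heval_longitude_term /mX /longitude /meridian.
rewrite !(geval_mul, geval_powz, geval_pown) /= [expz (_ * _) _ _]expzN.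
congr (_ * _); apply: longitude_cheb_pair => //; last by lia.
exact: (central gv gu).
Qed.
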